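(* Assume $f$ has a unique global maximizer, contains no weak epistasis, and every order-1 epistasis of $f$ is strict. Then the epistatic graph contains no chordless directed cycle of size greater than $2$.
   Context: Fix $\ell\ge1$, loci $V=\{0,\dots,\ell-1\}$, chromosomes $\vec y\in\{0,1\}^V$, fitness $f:\{0,1\}^V\to\mathbb R$ (maximized) with unique global maximizer $g$. An assignment $A$ is a set of pairs $(v,a)$ with at most one pair per locus; coverage $\mathcal C(A)$; $A[v]$ its allele at $v$. $\Psi_A$ is the set of chromosomes agreeing with $A$ on $\mathcal C(A)$ with maximum fitness among such chromosomes; $\Psi_A[v]=\{\psi_v:\psi\in\Psi_A\}$. Epistasis: for $v\in V$ and nonempty $S\subseteq V\setminus\{v\}$, $S\Rightarrow v$ iff for every $s\in S$ there exists an assignment $A$ with $\mathcal C(A)=S$ and $\Psi_A[v]\neq\Psi_{A\setminus\{(s,A[s])\}}[v]$. An epistasis $S\Rightarrow v$ with $|S|\ge2$ is weak if no nonempty proper subset $T\subsetneq S$ has $T\Rightarrow v$. An order-1 epistasis $\{u\}\Rightarrow v$ is strict, written $u\rightarrow v$, if $\Psi_{\{(u,1-g[u])\}}[v]=\{1-g[v]\}$. The epistatic graph (EG) is the directed graph on $V$ with edge $u\to v$ iff $\{u\}\Rightarrow v$ (under the assumption, iff $u\rightarrow v$). A directed cycle $v_0\rightarrow v_1\rightarrow\cdots\rightarrow v_{c-1}\rightarrow v_0$ of size $c$ (indices mod $c$) is chordless if there are no $i$ and $j\neq i+1 \pmod c$ with $v_i\rightarrow v_j$ (so e.g. in $a\to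 b\to c\to a$, an edge $b\to a$ counts as a chord). *)

From HB Require Import structures.
From mathcomp Require Import all_boot all_order all_algebra.
From mathcomp Require Import reals.
Set Implicit Arguments. Unset Strict Implicit. Unset Printing Implicit Defensive.
Import Order.TTheory GRing.Theory Num.Theory.
Local Open Scope ring_scope.

Section Epistasis.
Variables (R : realType) (l : nat).

(* loci V = 'I_l, chromosomes y : V -> {0,1} (false = 0, true = 1) *)
Definition chrom := {ffun 'I_l -> bool}.

(* an assignment: at most one allele per locus, i.e. a partial map V -> {0,1};
   A v = Some a  iff  (v,a) \in A *)
Definition assignment := {ffun 'I_l -> option bool}.

Definition coverage (A : assignment) : {set 'I_l} := [set v | A v != None].

Definition remove_locus (A : assignment) (s : 'I_l) : assignment :=
  [ffun v => if v == s then None else A v].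

Definition agrees (A : assignment) (y : chrom) : bool :=
  [forall v, if A v is Some a then y v == a else true].

Variable f : chrom -> R.

Definition Psi (A : assignment) : {set chrom} :=
  [set y | agrees A y & [forall z, agrees A z ==> (f z <= f y)]].

Definition PsiAt (A : assignment) (v : 'I_l) : {set bool} :=
  [set (y : chrom) v | y in Psi A].

Definition epistasis (S : {set 'I_l}) (v : 'I_l) : Prop :=
  [/\ v \notin S, S != set0 &
      forall s, s \in S -> exists A : assignment,
        coverage A = S /\ PsiAt A v != PsiAt (remove_locus A s) v].

Definition weak_epistasis (S : {set 'I_l}) (v : 'I_l) : Prop :=
  [/\ 2 <= #|S|, epistasis S v &
      forall T : {set 'I_l}, T != set0 -> T \proper S -> ~ epistasis T v]%N.

Definition unique_global_max (g : chrom) : Prop :=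
  (forall y, f y <= f g) /\ (forall y, (forall z, f z <= f y) -> y = g).

Definition single (u : 'I_l) (a : bool) : assignment :=
  [ffun v => if v == u then Some a else None].

Definition strict_epistasis (g : chrom) (u v : 'I_l) : Prop :=
  epistasis [set u] v /\ PsiAt (single u (~~ g u)) v = [set ~~ g v].

Definition EG_edge (u v : 'I_l) : Prop := epistasis [set u] v.

End Epistasis.

Definition chordless_cycle (T : Type) (E : T -> T -> Prop) (c : nat)
  (w : nat -> T) : Prop :=
  [/\ (forall i j, (i < c)%N -> (j < c)%N -> w i = w j -> i = j),
      (forall i, (i < c)%N -> E (w i) (w (i.+1 %% c)%N)) &
      (forall i j, (i < c)%N -> (j < c)%N -> j != (i.+1 %% c)%N ->
                   ~ E (w i) (w j))].

From mathcomp Require Import all_boot all_order all_algebra.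
From mathcomp Require Import reals.
Set Implicit Arguments. Unset Strict Implicit. Unset Printing Implicit Defensive.
Import Order.TTheory GRing.Theory Num.Theory.
Local Open Scope ring_scope.

(* Write [y_u] for a best chromosome with the allele at [u] flipped away from
   the optimum [g]. Along a cycle u_0 -> u_1 -> ... of strict epistases, [y_u_i]
   already carries the flipped allele at u_(i+1), so f (y_u_i) <= f (y_u_(i+1)),
   and going around the cycle all these fitnesses are equal. Hence [y_u_0] is
   also a best chromosome with u_1 flipped, so by strictness of u_1 -> u_2 it
   carries the flipped allele at u_2. Dropping the assignment at u_0 leaves only
   [g] as best chromosome, so u_0 -> u_2 is an edge: a chord. *)

Lemma cyclic_le_mod (d : Order.disp_t) (T : porderType d) (c : nat)
    (a : nat -> T) :
  (forall i, (i < c)%N -> (a i <= a (i.+1 %% c)%N)%O) ->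
  forall i j, (i < c)%N -> (j < c)%N -> (a i <= a j)%O.
Proof.
move=> step.
have up i j : (i <= j)%N -> (j < c)%N -> (a i <= a j)%O.
  move=> /subnK <-; elim: (j - i)%N => [//|k IHk] ltc.
  rewrite addSn; apply: le_trans (IHk (ltnW ltc)) _.
  by have := step _ (ltnW ltc); rewrite modn_small.
move=> i j ltic ltjc; case: (leqP i j) => [leij | _]; first exact: up.
have c_gt0 : (0 < c)%N by apply: leq_ltn_trans ltjc.
have wrap : (a c.-1 <= a 0%N)%O.
  by have := step c.-1; rewrite prednK // modnn; apply.
have lt_c1c : (c.-1 < c)%N by rewrite prednK.
have le_ic1 : (i <= c.-1)%N by rewrite -ltnS prednK.
exact: le_trans (up _ _ le_ic1 lt_c1c) (le_trans wrap (up _ _ (leq0n j) ltjc)).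
Qed.

Section Fitness.
Context {R : realType} {l : nat} {f : chrom l -> R}.

Lemma PsiP (A : assignment l) y :
  reflect (agrees A y /\ forall z, agrees A z -> f z <= f y) (y \in Psi f A).
Proof.
rewrite inE; apply: (iffP andP) => -[Ay maxy]; split=> //.
  by move=> z; apply/implyP; move/forallP: maxy.
by apply/forallP => z; apply/implyP/maxy.
Qed.

Lemma Psi_nonempty (A : assignment l) y0 :
  agrees A y0 -> exists y, y \in Psi f A.
Proof.
move=> Ay0; case: (arg_maxP f Ay0) => y Ay maxy.
by exists y; apply/PsiP.
Qed.

Lemma Psi_le_mem (A : assignment l) y z :
  y \in Psi f A -> agrees A z -> f y <= f z -> z \in Psi f A.
Proof.
move=> /PsiP[_ maxy] Az le_yz; apply/PsiP; split=> // x Ax.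
exact: le_trans (maxy x Ax) le_yz.
Qed.

Lemma agrees_single (u : 'I_l) a (y : chrom l) :
  agrees (single u a) y = (y u == a).
Proof.
apply/forallP/eqP => [/(_ u) | yu v]; first by rewrite ffunE eqxx => /eqP.
by rewrite ffunE; case: eqP => // ->; rewrite yu.
Qed.

Lemma coverage_single (u : 'I_l) a : coverage (single u a) = [set u].
Proof. by apply/setP => v; rewrite !inE ffunE; case: (v == u). Qed.

Lemma agrees_remove_single (u : 'I_l) a (y : chrom l) :
  agrees (remove_locus (single u a) u) y.
Proof. by apply/forallP => v; rewrite !ffunE; case: (v == u). Qed.

Lemma PsiAt_remove_single g u a v :
  unique_global_max f g -> PsiAt f (remove_locus (single u a) u) v = [set g v].
Proof.
case=> gmax gunique; apply/setP => b; rewrite inE.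
apply/imsetP/eqP => [[y /PsiP[_ maxy] ->] | ->].
  by rewrite (gunique y) // => z; apply/maxy/agrees_remove_single.
by exists g => //; apply/PsiP; split=> [|z _]; [apply: agrees_remove_single|].
Qed.

Context {g : chrom l}.

Lemma strict_flipped u v y :
  strict_epistasis f g u v -> y \in Psi f (single u (~~ g u)) -> y v = ~~ g v.
Proof.
case=> _ flipped Psiy; apply/eqP; rewrite -in_set1 -flipped.
exact: imset_f.
Qed.

Lemma strict_Psi_le u v y z :
  strict_epistasis f g u v -> y \in Psi f (single u (~~ g u)) ->
  z \in Psi f (single v (~~ g v)) -> f y <= f z.
Proof.
move=> uv Psiy /PsiP[_ maxz]; apply: maxz.
by rewrite agrees_single (strict_flipped uv Psiy).
Qed.

Lemma flipped_epistasis u v y :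
  unique_global_max f g -> u != v -> y \in Psi f (single u (~~ g u)) ->
  y v = ~~ g v -> epistasis f [set u] v.
Proof.
move=> gmax neq_uv Psiy yv; split.
- by rewrite inE eq_sym.
- by apply/set0Pn; exists u; rewrite inE.
move=> s; rewrite inE => /eqP ->; exists (single u (~~ g u)).
split; first exact: coverage_single.
rewrite (PsiAt_remove_single _ _ _ gmax); apply/negP => /eqP PsiAt_g.
have : y v \in PsiAt f (single u (~~ g u)) v by apply: imset_f.
by rewrite PsiAt_g yv inE; case: (g v).
Qed.

End Fitness.

Theorem lemma6 (R : realType) (l : nat) (Hl : (0 < l)%N)
  (f : chrom l -> R) (g : chrom l) :
  unique_global_max f g ->
  (forall (S : {set 'I_l}) (v : 'I_l), ~ weak_epistasis f S v) ->
  (forall u v : 'I_l, epistasis f [set u] v -> strict_epistasis f g u v) ->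
  ~ exists (c : nat) (w : nat -> 'I_l),
      (2 < c)%N /\ chordless_cycle (EG_edge f) c w.
Proof.
move=> gmax _ strict [c [w [c_gt2 [w_inj edge no_chord]]]].
have c_gt0 : (0 < c)%N by apply: ltn_trans c_gt2.
have c_gt1 : (1 < c)%N by apply: ltn_trans c_gt2.
have best u : exists y, y \in Psi f (single u (~~ g u)).
  by apply: (Psi_nonempty (y0 := [ffun v => if v == u then ~~ g u else g v]));
     rewrite agrees_single ffunE eqxx.
pose y i := xchoose (best (w i)).
have Psiy i : y i \in Psi f (single (w i) (~~ g (w i))) by apply: xchooseP.
have strict_w i : (i < c)%N -> strict_epistasis f g (w i) (w (i.+1 %% c)%N).
  by move=> ltic; apply/strict/edge.
have le_y10 : f (y 1%N) <= f (y 0%N).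
  apply: (cyclic_le_mod (c := c) (a := fun i => f (y i))) => // i ltic.
  exact: strict_Psi_le (strict_w i ltic) (Psiy i) (Psiy _).
have strict01 := strict_w 0%N c_gt0; have strict12 := strict_w 1%N c_gt1.
rewrite !modn_small // in strict01 strict12.
have Psiy0 : y 0%N \in Psi f (single (w 1%N) (~~ g (w 1%N))).
  apply: Psi_le_mem (Psiy 1%N) _ le_y10.
  by rewrite agrees_single (strict_flipped strict01 (Psiy 0%N)).
apply: (no_chord 0%N 2%N c_gt0 c_gt2); first by rewrite modn_small.
apply: (flipped_epistasis gmax _ (Psiy 0%N)).
  by apply/eqP => /(w_inj _ _ c_gt0 c_gt2).
exact: strict_flipped strict12 Psiy0.
Qed.
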